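(* Let $\mu>0$ and let $G:\mathbb{R}^n_+\to\mathbb{R}_+$ be a generalized extreme value generating function, i.e. (G1) $G$ is homogeneous of degree $1/\mu$; (G2) $G(x)\to\infty$ as $x^{(i)}\to\infty$ for each $i$; (G3) every mixed partial derivative of $G$ with respect to $k$ distinct variables is $\ge 0$ if $k$ is odd and $\le 0$ if $k$ is even. Suppose there is a constant $\tilde C\in(-1,\infty)$ such that for all $i=1,\dots,n$ and all $x\in\mathbb{R}^n_+$, \[ \frac{\partial^2 G(x)}{\partial x^{(i)2}}\cdot x^{(i)}\le \tilde C\cdot\frac{\partial G(x)}{\partial x^{(i)}}. \] Then for all $x\in\mathbb{R}^n_+$, \[ \sum_{i=1}^n\frac{\partial^2 G(x)}{\partial x^{(i)2}}\cdot (x^{(i)})^2\le M\cdot G(x)\quad\text{with } M=\frac{\tilde C}{\mu}. \]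
   Context: $\mathbb{R}^n_+$ is the set of vectors in $\mathbb{R}^n$ with nonnegative components. *)

From HB Require Import structures.
From mathcomp Require Import all_boot all_order all_algebra.
From mathcomp Require Import all_classical all_reals all_analysis.
Set Implicit Arguments. Unset Strict Implicit. Unset Printing Implicit Defensive.
Import Order.TTheory GRing.Theory Num.Theory.
Import numFieldNormedType.Exports.
Local Open Scope ring_scope.

Definition unitv (R : realType) (n : nat) (i : 'I_n) : 'rV[R]_n := delta_mx 0 i.

Definition nonneg_orthant (R : realType) (n : nat) (x : 'rV[R]_n) : Prop :=
  forall i : 'I_n, 0 <= x ord0 i.
Definition pos_orthant (R : realType) (n : nat) (x : 'rV[R]_n) : Prop :=
  forall i : 'I_n, 0 < x ord0 i.

Definition partial (R : realType) (n : nat) (i : 'I_n)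
  (f : 'rV[R]_n -> R) : 'rV[R]_n -> R :=
  fun x => 'D_(unitv R i) f x.

(* iterated (mixed) partial derivative: mpartial [:: i1; ...; ik] f
   = d/dx_i1 ( ... (d/dx_ik f)) *)
Definition mpartial (R : realType) (n : nat) (s : seq 'I_n)
  (f : 'rV[R]_n -> R) : 'rV[R]_n -> R :=
  foldr (fun i g => partial i g) f s.

From HB Require Import structures.
From mathcomp Require Import all_boot all_order all_algebra.
From mathcomp Require Import all_classical all_reals all_analysis.
From mathcomp Require Import ring lra.
Import Order.TTheory GRing.Theory Num.Theory.
Import numFieldNormedType.Exports.
Local Open Scope classical_set_scope.
Local Open Scope ring_scope.
Set Implicit Arguments. Unset Strict Implicit.

(* Multiplying the hypothesis by x_i and summing bounds the left-hand side by
   Ct * sum_i x_i d_iG(x), so everything rests on Euler's identity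
   sum_i x_i d_iG(x) = G(x)/mu.  Only partial derivatives are assumed to exist,
   so G need not be differentiable; instead we walk from x to t x changing one
   coordinate at a time.  By the mean value theorem the k-th step equals
   (t - 1) x_k d_kG at an intermediate point.  By (G3) the mixed partials
   d_j d_kG (j <> k) are nonpositive, so d_kG is antitone in the other
   coordinates and that value is bounded, on the right side, by d_kG on the
   coordinate line through x, where it is continuous.  Hence
   G(t x) - G(x) - (t - 1) sum_k x_k d_kG(x) <= o(|t - 1|), and comparing with
   the derivative of t^(1/mu) G(x) at t = 1 gives the identity. *)

Section AlongLine.
Variables (R : realType) (V : normedModType R) (f : V -> R) (z v : V).

Lemma is_derive_along (s : R) : derivable f (z + s *: v) v ->
  is_derive s 1 (fun t => f (z + t *: v)) ('D_v f (z + s *: v)).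
Proof.
pose line t := f (z + t *: v).
have quotE : (fun h : R => h^-1 *: ((line \o shift s) (h *: 1) - line s))
    = (fun h => h^-1 *: ((f \o shift (z + s *: v)) (h *: v) - f (z + s *: v))).
  by apply/funext => h; rewrite /line /= [h%:A]mulr1 scalerDl addrCA.
move=> df; have dline : derivable line s 1 by rewrite /derivable quotE.
suff <- : 'D_1 line s = 'D_v f (z + s *: v) by exact: derivableP.
by rewrite /derive quotE.
Qed.

Lemma continuous_along (s : R) : derivable f (z + s *: v) v ->
  {for s, continuous (fun t : R => f (z + t *: v))}.
Proof.
move=> /is_derive_along[dline _].
by apply: differentiable_continuous; apply/derivable1_diffP.
Qed.

Lemma MVT_along (a b : R) : a <= b ->
  (forall s, a <= s <= b -> derivable f (z + s *: v) v) ->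
  exists2 c, a <= c <= b &
    f (z + b *: v) - f (z + a *: v) = (b - a) * 'D_v f (z + c *: v).
Proof.
move=> ab df.
have [s||c cab ->] := @MVT_segment R (fun t => f (z + t *: v))
    (fun s => 'D_v f (z + s *: v)) a b ab.
- by rewrite in_itv /= => /andP[? ?]; apply/is_derive_along/df; rewrite !ltW.
- apply: derivable_within_continuous => s sab.
  by have [] := is_derive_along (df s sab).
by exists c; [rewrite in_itv /= in cab | rewrite mulrC].
Qed.

Lemma MVT_along0 (b : R) :
  (forall s, `|s| <= `|b| -> derivable f (z + s *: v) v) ->
  exists2 c, `|c| <= `|b| & f (z + b *: v) - f z = b * 'D_v f (z + c *: v).
Proof.
move=> df; case: (leP 0 b) => b0.
- have [s /andP[s0 sb]|c /andP[c0 cb]] := MVT_along b0.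
  + by apply: df; rewrite !ger0_norm.
  + by rewrite scale0r addr0 subr0 => ->; exists c; rewrite ?ger0_norm.
- have [s /andP[bs s0]|c /andP[bc c0]] := MVT_along (ltW b0).
  + by apply: df; rewrite !ler0_norm ?lerN2 // ltW.
  + rewrite scale0r addr0 sub0r => E; exists c.
      by rewrite !ler0_norm ?lerN2 // ltW.
    by rewrite -opprB E mulNr opprK.
Qed.

End AlongLine.

Lemma is_derive_eq0_of_le_o (R : realType) (phi : R -> R) (t0 d : R) :
  phi t0 = 0 -> is_derive t0 1 phi d ->
  (forall eps, 0 < eps -> \forall t \near t0, phi t <= eps * `|t - t0|) ->
  d = 0.
Proof.
move=> phi0 [dphi <-] small.
have quotE : (fun h : R => h^-1 *: ((phi \o shift t0) (h *: 1) - phi t0))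
    = (fun h => h^-1 * phi (t0 + h)).
  by apply/funext => h; rewrite phi0 subr0 /= [h%:A]mulr1 addrC.
have cvq : (fun h : R => h^-1 * phi (t0 + h)) @ 0^' --> 'D_1 phi t0.
  by rewrite -quotE; exact: dphi.
have bound eps : 0 < eps -> \forall h \near (0 : R), phi (t0 + h) <= eps * `|h|.
  by move=> /small /nbhs0P; apply: filterS => h; rewrite [t0 + h]addrC addrK.
apply/eqP; rewrite -normr_le0; apply/ler_addgt0Pr => eps eps0; rewrite add0r.
rewrite ler_norml; apply/andP; split.
- have cvl : (fun h : R => h^-1 * phi (t0 + h)) @ 0^'- --> 'D_1 phi t0.
    apply: cvg_trans cvq; apply: cvg_app.
    by apply: within_subset => h /lt_eqF/negbT.
  apply: (cvgr_to_ge cvl).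
  near=> h.
  have hb : phi (t0 + h) <= eps * `|h|.
    by near: h; apply: cvg_within; exact: bound eps eps0.
  have h0 : h < 0 by near: h; exact: nbhs_left_lt.
  rewrite ler_ndivlMl //; apply: (le_trans hb).
  by rewrite (ler0_norm (ltW h0)) !mulrN mulrC.
- have cvr : (fun h : R => h^-1 * phi (t0 + h)) @ 0^'+ --> 'D_1 phi t0.
    apply: cvg_trans cvq; apply: cvg_app.
    by apply: within_subset => h /gt_eqF/negbT.
  apply: (cvgr_to_le cvr).
  near=> h.
  have hb : phi (t0 + h) <= eps * `|h|.
    by near: h; apply: cvg_within; exact: bound eps eps0.
  have h0 : 0 < h by near: h; exact: nbhs_right_gt.
  rewrite ler_pdivrMl //; apply: (le_trans hb).
  by rewrite gtr0_norm // mulrC.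
Unshelve. all: end_near.
Qed.

Lemma near_dist_scaled (R : realType) (t0 K : R) (P : R -> Prop) :
  (\forall c \near 0, P c) ->
  \forall t \near t0, forall c, `|c| <= `|t - t0| * K -> P c.
Proof.
move=> /nbhs_ballP[e e0 Pe]; apply/nbhs_ballP.
have K1 : 0 < `|K| + 1 by rewrite ltr_wpDl.
exists (e / (`|K| + 1)); first exact: divr_gt0.
move=> t; rewrite /ball /= distrC ltr_pdivlMr // => tt0 c cK.
apply: Pe; rewrite /ball /= sub0r normrN (le_lt_trans cK) //.
apply: le_lt_trans tt0.
by rewrite ler_wpM2l // (le_trans (ler_norm K)) // lerDl.
Qed.

Section Coordinates.
Variables (R : realType) (n : nat).
Implicit Types (u w y : 'rV[R]_n) (j k : 'I_n) (c : R).

Lemma addZunitvE y c j k :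
  (y + c *: unitv R j) ord0 k = y ord0 k + c * (j == k)%:R.
Proof. by rewrite /unitv !mxE /= eq_sym. Qed.

Lemma pos_orthant_addZunitv y c j :
  pos_orthant y -> - c < y ord0 j -> pos_orthant (y + c *: unitv R j).
Proof.
move=> y_pos yj k; rewrite addZunitvE.
case: (eqVneq j k) => [<-|_]; rewrite ?mulr1 ?mulr0 ?addr0; last exact: y_pos.
lra.
Qed.

Definition mix_row (m : nat) w u : 'rV[R]_n :=
  \row_j (if (j < m)%N then w ord0 j else u ord0 j).

Lemma mix_row0 w u : mix_row 0 w u = u.
Proof. by apply/rowP => j; rewrite mxE. Qed.

Lemma mix_row_full w u : mix_row n w u = w.
Proof. by apply/rowP => j; rewrite mxE ltn_ord. Qed.

Lemma mix_rowS w u k :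
  mix_row k.+1 w u = mix_row k w u + (w ord0 k - u ord0 k) *: unitv R k.
Proof.
apply/rowP => j; rewrite addZunitvE !mxE ltnS leq_eqVlt.
case: (eqVneq k j) => [<-|kj]; first by rewrite eqxx ltnn mulr1 addrC subrK.
have /negPf -> : (j != k :> nat) by rewrite eq_sym.
by rewrite mulr0 addr0.
Qed.

Lemma mix_row_id w u k : mix_row k w u ord0 k = u ord0 k.
Proof. by rewrite mxE ltnn. Qed.

Lemma pos_orthant_mix_row m w u :
  pos_orthant w -> pos_orthant u -> pos_orthant (mix_row m w u).
Proof. by move=> w_pos u_pos j; rewrite mxE; case: ifP. Qed.

Section Antitone.
Variables (f : 'rV[R]_n -> R) (k : 'I_n).
Hypothesis f_antitone : forall j y c, j != k -> pos_orthant y -> 0 <= c ->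
  f (y + c *: unitv R j) <= f y.

Lemma antitone_off_coord u w : pos_orthant u ->
  (forall j, u ord0 j <= w ord0 j) -> u ord0 k = w ord0 k -> f w <= f u.
Proof.
move=> u_pos uw ukE.
have w_pos : pos_orthant w by move=> j; exact: lt_le_trans (u_pos j) (uw j).
suff mix_le m : (m <= n)%N -> f (mix_row m w u) <= f u.
  by rewrite -(mix_row_full w u) mix_le.
elim: m => [_|m IHm mn]; first by rewrite mix_row0.
rewrite (mix_rowS w u (Ordinal mn)) /=.
case: (eqVneq (Ordinal mn) k) => [->|mk].
  by rewrite ukE subrr scale0r addr0 IHm // ltnW.
apply: le_trans (IHm (ltnW mn)); apply: f_antitone => //.
  exact: pos_orthant_mix_row.
by rewrite subr_ge0.
Qed.

End Antitone.
End Coordinates.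

Section EulerIdentity.
Variables (R : realType) (n : nat) (G : 'rV[R]_n -> R) (a : R).
Hypothesis G_derivable : forall i x, pos_orthant x -> derivable G x (unitv R i).
Hypothesis partial_derivable : forall k i x, pos_orthant x ->
  derivable (partial k G) x (unitv R i).
Hypothesis cross_partial_le0 : forall j k x, j != k -> pos_orthant x ->
  partial j (partial k G) x <= 0.
Hypothesis G_homogeneous : forall x t, pos_orthant x -> 0 < t ->
  G (t *: x) = t `^ a * G x.

Lemma partial_antitone k j y c : j != k -> pos_orthant y -> 0 <= c ->
  partial k G (y + c *: unitv R j) <= partial k G y.
Proof.
move=> jk y_pos c0.
have shift_pos s : 0 <= s -> pos_orthant (y + s *: unitv R j).
  move=> s0; apply: pos_orthant_addZunitv => //.
  by rewrite (le_lt_trans _ (y_pos j)) ?oppr_le0.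
have [s /andP[s0 _]|s /andP[s0 _]] :=
  MVT_along (f := partial k G) (z := y) (v := unitv R j) c0.
  exact/partial_derivable/shift_pos.
rewrite scale0r addr0 subr0 => E; rewrite -subr_le0 E mulr_ge0_le0 //.
exact/cross_partial_le0/shift_pos.
Qed.

Variable x : 'rV[R]_n.
Hypothesis x_pos : pos_orthant x.

Definition ray_path (t : R) (m : nat) : 'rV[R]_n := mix_row m (t *: x) x.

Lemma ray_pathS t (k : 'I_n) :
  ray_path t k.+1 = ray_path t k + ((t - 1) * x ord0 k) *: unitv R k.
Proof. by rewrite /ray_path mix_rowS mxE mulrBl mul1r. Qed.

Lemma pos_orthant_ray_path t m : 0 < t -> pos_orthant (ray_path t m).
Proof.
by move=> t0; apply: pos_orthant_mix_row => // j; rewrite mxE mulr_gt0.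
Qed.

Lemma ray_path_ge t m j : 1 <= t -> x ord0 j <= ray_path t m ord0 j.
Proof.
by move=> t1; rewrite !mxE; case: ifP => // _; rewrite ler_peMl // ltW.
Qed.

Lemma ray_path_le t m j : t <= 1 -> ray_path t m ord0 j <= x ord0 j.
Proof.
by move=> t1; rewrite !mxE; case: ifP => // _; rewrite ler_piMl // ltW.
Qed.

Lemma ray_increment_le t (k : 'I_n) : `|t - 1| < 1 ->
  exists2 c, `|c| <= `|t - 1| * x ord0 k &
    G (ray_path t k.+1) - G (ray_path t k)
      <= (t - 1) * x ord0 k * partial k G (x + c *: unitv R k).
Proof.
move=> t_near; have t0 : 0 < t by move: t_near; rewrite ltr_norml; lra.
set b := (t - 1) * x ord0 k.
have b_lt : `|b| < x ord0 k by rewrite normrM (gtr0_norm (x_pos k)) gtr_pMl.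
have shift_pos y s : pos_orthant y -> y ord0 k = x ord0 k -> `|s| <= `|b| ->
    pos_orthant (y + s *: unitv R k).
  move=> y_pos yk sb; apply: pos_orthant_addZunitv => //; rewrite yk.
  by rewrite (le_lt_trans _ b_lt) // (le_trans (ler_norm _)) ?normrN.
have path_pos := pos_orthant_ray_path k t0.
have path_k : ray_path t k ord0 k = x ord0 k := mix_row_id _ _ _.
rewrite ray_pathS; have [c cb ->] := MVT_along0 (fun s sb =>
  G_derivable (shift_pos _ s path_pos path_k sb)).
exists c; first by rewrite normrM (gtr0_norm (x_pos k)) in cb.
have comp_coords (u w : 'rV[R]_n) : (forall j, u ord0 j <= w ord0 j) ->
    forall j, (u + c *: unitv R k) ord0 j <= (w + c *: unitv R k) ord0 j.
  by move=> uw j; rewrite !addZunitvE lerD2r.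
have xc_pos := shift_pos _ _ x_pos erefl cb.
have zc_pos := shift_pos _ _ path_pos path_k cb.
have kE : (x + c *: unitv R k) ord0 k = (ray_path t k + c *: unitv R k) ord0 k.
  by rewrite !addZunitvE path_k.
(* For t >= 1 the path lies above x coordinatewise and for t < 1 below it;
   the factor t - 1 turns both comparisons the same way. *)
rewrite -/(partial k G _); case: (leP 1 t) => t_1.
- apply: ler_wpM2l; first by rewrite mulr_ge0 ?subr_ge0 ?(ltW (x_pos k)).
  apply: (antitone_off_coord (partial_antitone (k := k))) => //.
  by apply: comp_coords => j; apply: ray_path_ge.
- apply: ler_wnM2l.
    by rewrite mulr_le0_ge0 ?subr_le0 ?(ltW (x_pos k)) ?(ltW t_1).
  apply: (antitone_off_coord (partial_antitone (k := k))) => //.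
  by apply: comp_coords => j; apply/ray_path_le/ltW.
Qed.

Lemma euler_remainder_small eps : 0 < eps ->
  \forall t \near (1 : R), G (t *: x) - G x
    - (t - 1) * \sum_(k < n) x ord0 k * partial k G x <= eps * `|t - 1|.
Proof.
move=> eps0; set X := \sum_(k < n) x ord0 k.
have X1 : 0 < X + 1 by rewrite ltr_wpDl // sumr_ge0 // => k _; exact: ltW.
set e := eps / (X + 1); have e0 : 0 < e by exact: divr_gt0.
have partial_near k : \forall c \near 0,
    `|partial k G x - partial k G (x + c *: unitv R k)| < e.
  have dk : derivable (partial k G) (x + 0 *: unitv R k) (unitv R k).
    by rewrite scale0r addr0; exact: partial_derivable.
  have /(cvgrPdist_lt _ _).1 := continuous_along dk.
  by rewrite scale0r addr0 => /(_ e e0).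
near=> t.
have t_near : `|t - 1| < 1.
  near: t; apply: filterS (nbhsx_ballx (1 : R) _ ltr01) => t.
  by rewrite /ball /= distrC.
have close : forall (k : 'I_n) c, `|c| <= `|t - 1| * x ord0 k ->
    `|partial k G x - partial k G (x + c *: unitv R k)| < e.
  near: t; apply: filter_forall => k.
  exact: near_dist_scaled (partial_near k).
have term (k : 'I_n) : G (ray_path t k.+1) - G (ray_path t k)
    - (t - 1) * (x ord0 k * partial k G x) <= `|t - 1| * x ord0 k * e.
  have [c cx inc] := ray_increment_le k t_near.
  rewrite (le_trans (lerB inc (lexx _))) // mulrA -mulrBr.
  rewrite (le_trans (ler_norm _)) // !normrM (gtr0_norm (x_pos k)).
  rewrite ler_wpM2l //.
    by rewrite mulr_ge0 // ltW.
  by rewrite distrC ltW // close.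
have telescope_ray : G (t *: x) - G x
    = \sum_(k < n) (G (ray_path t k.+1) - G (ray_path t k)).
  rewrite -(big_mkord xpredT (fun k => G (ray_path t k.+1) - G (ray_path t k))).
  by rewrite telescope_sumr // /ray_path mix_row_full mix_row0.
rewrite telescope_ray mulr_sumr -sumrB.
rewrite (le_trans (ler_sum _ (fun k _ => term k))) //.
have Xe : X * e <= eps.
  by rewrite /e mulrA ler_pdivrMr // mulrDr mulr1 mulrC lerDl ltW.
by rewrite -mulr_suml -mulr_sumr -/X -mulrA mulrC ler_wpM2r.
Unshelve. all: end_near.
Qed.

Lemma euler_identity : \sum_(k < n) x ord0 k * partial k G x = a * G x.
Proof.
set S := \sum_(k < n) x ord0 k * partial k G x.
have dpow := is_derive1_powR a (@ltr01 R).
have dphi : is_derive (1 : R) 1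
    ((@powR R ^~ a - cst 1) * cst (G x) - (id - cst 1) * cst S) (a * G x - S).
  apply: is_derive_eq.
  by rewrite /= powR1 !scaler0 !add0r !subr0 mulr1 [S%:A]mulr1 [G x *: a]mulrC.
apply/eqP; rewrite eq_sym -subr_eq0; apply/eqP/(is_derive_eq0_of_le_o _ dphi).
  by rewrite !fctE powR1 !subrr !mul0r subr0.
move=> eps /euler_remainder_small remainder_small.
apply: filterS2 remainder_small (nbhsx_ballx (1 : R) _ ltr01) => t.
rewrite /ball /= ltr_distl => rem t_near.
have t_pos : 0 < t by move: t_near; lra.
by rewrite !fctE mulrBl mul1r -G_homogeneous.
Qed.

End EulerIdentity.

Unset Implicit Arguments.

Theorem proposition1 (R : realType) (n : nat) (mu Ct : R)
  (G : 'rV[R]_n -> R) :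
  0 < mu ->
  (* G maps R^n_+ into R_+ *)
  (forall x, nonneg_orthant x -> 0 <= G x) ->
  (* smoothness: all iterated partial derivatives exist on the open orthant *)
  (forall (s : seq 'I_n) (i : 'I_n) x, pos_orthant x ->
     derivable (mpartial s G) x (unitv R i)) ->
  (* (G1) homogeneity of degree 1/mu *)
  (forall x (t : R), nonneg_orthant x -> 0 < t ->
     G (t *: x) = t `^ (mu^-1) * G x) ->
  (* (G2) G x -> +oo as x^(i) -> +oo *)
  (forall x (i : 'I_n), nonneg_orthant x ->
     G (x + t *: unitv R i) @[t --> +oo] --> +oo) ->
  (* (G3) sign conditions on mixed partials w.r.t. k distinct variables *)
  (forall (s : seq 'I_n) x, pos_orthant x -> uniq s -> (0 < size s)%N ->
     if odd (size s) then 0 <= mpartial s G x else mpartial s G x <= 0) ->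
  -1 < Ct ->
  (forall (i : 'I_n) x, pos_orthant x ->
     mpartial [:: i; i] G x * x ord0 i <= Ct * mpartial [:: i] G x) ->
  forall x, pos_orthant x ->
    \sum_(i < n) mpartial [:: i; i] G x * (x ord0 i) ^+ 2 <= (Ct / mu) * G x.
Proof.
move=> _ _ G_derivable G_homogeneous _ G_signs _ second_le x x_pos.
have euler : \sum_(i < n) x ord0 i * mpartial [:: i] G x = mu^-1 * G x.
  apply: euler_identity x_pos.
  - by move=> i y; exact: (G_derivable [::]).
  - by move=> k i y; exact: (G_derivable [:: k]).
  - move=> j k y jk y_pos.
    by have := G_signs [:: j; k] y y_pos; rewrite /= inE jk; apply.
  - by move=> y t y_pos; apply: G_homogeneous => i; exact/ltW.
rewrite -mulrA -euler mulr_sumr; apply: ler_sum => i _.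
have := ler_wpM2r (ltW (x_pos i)) (second_le i x x_pos).
by rewrite expr2 mulrA [x ord0 i * _]mulrC mulrA.
Qed.
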